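(* Let $(x,y)$ be a $\delta$-feasible assignment, $V_0\subseteq V$, and $d=\max_{a,b\in V_0}\mathrm{dist}_G(a,b)$. After group shifting on $V_0$ one obtains a $(\delta+d)$-feasible assignment $(x',y')$ in which at most one vertex of $V_0$ has a non-integral $y'$-value, and $\mathrm{radius}_{(x',y')}(v)\le\mathrm{radius}_{(x,y)}(v)$ for every $v\in V\setminus V_0$.
   Context: $G=(V,E)$ undirected unweighted graph with shortest-path distance $\mathrm{dist}_G$, $L:V\to\mathbb{N}$, $k$ a positive integer. An assignment is a pair $x:V\times V\to\mathbb{R}_{\ge0}$, $y:V\to\mathbb{R}_{\ge0}$; it is $\delta$-feasible if: (1) $\sum_u y_u=k$; (2) $x_{u,v}\le y_u$; (3) $\sum_v x_{u,v}\le L(u)y_u$; (4) $\sum_u x_{u,v}=1$; (5) $0\le y_u\le1$; (6) $x_{u,v}=0$ whenever $\mathrm{dist}_G(u,v)>\delta$; (7) $x_{u,v}\ge0$. $\mathrm{radius}_{(x,y)}(u)$ is the largest integer $i$ such that some $v$ has $\mathrm{dist}_G(v,u)=i$ and $x_{u,v}>0$ ($0$ if none). Shifting $\alpha$ from $a$ to $b$ (where $a\neq b$, $L(a)\le L(b)$, $0<\alpha\le\min(y_a,1-y_b)$): with $\epsilon=\alpha/y_a$, for each $v$ move $\epsilon x_{a,v}$ from $x_{a,v}$ to $x_{b,v}$, and increase $y_b$ by $\alpha$, decrease $y_a$ by $\alpha$. Group shifting on $V_0=\{v_1,\dots,v_\ell\}$, indexed so that $L(v_i)\le L(v_{i+1})$: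 as long as at least two vertices of $V_0$ have fractional (non-integral) $y$-value, let $a$ be the smallest and $b$ the largest index such that $y_{v_a}$ and $y_{v_b}$ are fractional, and shift $\min(y_{v_a},1-y_{v_b})$ from $v_a$ to $v_b$. *)

From HB Require Import structures.
From mathcomp Require Import all_boot all_order all_algebra.
Set Implicit Arguments. Unset Strict Implicit. Unset Printing Implicit Defensive.
Import Order.TTheory GRing.Theory Num.Theory.
Local Open Scope ring_scope.

Section Defs.
Variable T : finType.
Variable e : rel T.

Fixpoint within (n : nat) (u v : T) : bool :=
  (u == v) || (if n is n'.+1 then [exists w, e u w && within n' w v] else false).

(* shortest-path distance; None = infinity (disconnected). Shortest paths have
   fewer than #|T| edges, so searching n < #|T| suffices. *)
Definition dist (u v : T) : option nat :=
  let n := find (fun n => within n u v) (iota 0 #|T|) in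
  if (n < #|T|)%N then Some n else None.

(* extended-nat arithmetic / comparison, None = +infinity *)
Definition oadd (a b : option nat) : option nat :=
  match a, b with Some m, Some n => Some (m + n)%N | _, _ => None end.

Definition dist_gt (d delta : option nat) : bool :=
  match delta, d with
  | None, _ => false
  | Some _, None => true
  | Some dl, Some n => (dl < n)%N
  end.

(* d = max_{a,b in V0} dist(a,b) (0 if V0 empty, infinity if some pair disconnected) *)
Definition diam (V0 : seq T) : option nat :=
  foldr (fun a acc => foldr (fun b acc' =>
           match dist a b, acc' with
           | Some m, Some n => Some (maxn m n)
           | _, _ => None end) acc V0) (Some 0%N) V0.

Variable R : archiRealFieldType.

(* delta-feasibility (delta in extended naturals, None = no locality constraint) *)
Definition feasible (L : T -> nat) (k : nat) (delta : option nat)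
  (x : T -> T -> R) (y : T -> R) : Prop :=
  [/\ \sum_(u : T) y u = k%:R,
      (forall u v, x u v <= y u),
      (forall u, \sum_(v : T) x u v <= (L u)%:R * y u),
      (forall v, \sum_(u : T) x u v = 1)
    & [/\ (forall u, 0 <= y u <= 1),
         (forall u v, dist_gt (dist u v) delta -> x u v = 0)
       & (forall u v, 0 <= x u v)]].

Definition radius (x : T -> T -> R) (u : T) : nat :=
  \max_(v : T | 0 < x u v) odflt 0%N (dist v u).

Definition fractional (r : R) : bool := r \isn't a Num.int.

Definition shift (alpha : R) (a b : T) (x : T -> T -> R) (y : T -> R)
  : (T -> T -> R) * (T -> R) :=
  let eps := alpha / y a in
  (fun u v => if u == a then x a v - eps * x a v
              else if u == b then x b v + eps * x a v
              else x u v,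
   fun u => if u == a then y a - alpha
            else if u == b then y b + alpha else y u).

Definition gs_step (s : seq T) (xy : (T -> T -> R) * (T -> R))
  : (T -> T -> R) * (T -> R) :=
  let: (x, y) := xy in
  match [seq v <- s | fractional (y v)] with
  | a :: (_ :: _) as rest =>
      let b := last a rest in
      shift (Num.min (y a) (1 - y b)) a b x y
  | _ => xy
  end.

(* Each effective step
   makes one more vertex of s integral (and never breaks integrality), so
   size s iterations reach the point where the step no longer applies, after
   which further iterations are the identity. *)
Definition group_shift (s : seq T) (x : T -> T -> R) (y : T -> R)
  : (T -> T -> R) * (T -> R) :=
  iter (size s) (gs_step s) (x, y).
End Defs.

From HB Require Import structures.
From mathcomp Require Import all_boot all_order all_algebra.
From mathcomp Require Import zify lra.
Import Order.TTheory GRing.Theory Num.Theory.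
Set Implicit Arguments. Unset Strict Implicit. Unset Printing Implicit Defensive.
Local Open Scope ring_scope.

(* Group shifting only ever moves mass between two rows a, b of s, and only
   moves a fraction of row a onto row b.  Hence, throughout the iteration,
   the current assignment x'
   - satisfies every constraint except locality ("pre-feasibility"): a shift
     conserves the y-sum and the column sums, keeps y in [0,1] because
     alpha <= min(y_a, 1 - y_b), and respects capacities because L(a) <= L(b);
   - "tracks" x on s: rows outside s are unchanged, and a positive entry
     x'(u,v) with u in s implies x(w,v) > 0 for some w in s.
   Each effective step makes a or b integral and creates no new fractional
   vertex, so |s| steps leave at most one fractional vertex.  Tracking gives
   the radius claim (rows outside s are unchanged) and locality: if
   x'(u,v) > 0 with u in s then dist(u,v) <= dist(u,w) + dist(w,v) <= d + delta. *)

Section Walks.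
Variables (T : finType) (e : rel T).

Lemma within_S n u v : within e n u v -> within e n.+1 u v.
Proof.
elim: n u => [|n IH] u /=; first by rewrite orbF => /eqP ->; rewrite eqxx.
case/orP=> [->//|/existsP[w /andP[euw hw]]].
by apply/orP; right; apply/existsP; exists w; rewrite euw; exact: IH.
Qed.

Lemma within_add j n u v : within e n u v -> within e (n + j) u v.
Proof. by elim: j => [|j IH] h; [rewrite addn0 | rewrite addnS; apply/within_S/IH]. Qed.

Lemma within_trans m n u w v :
  within e m u w -> within e n w v -> within e (m + n) u v.
Proof.
elim: m u => [|m IH] u; first by rewrite /= orbF => /eqP ->.
have [-> _ hn|nuw] := eqVneq u w; first by rewrite addnC within_add.
rewrite /= (negPf nuw) => /existsP[z /andP[euz hz]] hn.
by apply/orP; right; apply/existsP; exists z; rewrite euz IH.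
Qed.

Lemma within_path n u v :
  within e n u v -> exists p, [/\ path e u p, last u p = v & (size p <= n)%N].
Proof.
elim: n u => [|n IH] u /=; first by rewrite orbF => /eqP ->; exists [::].
case/orP=> [/eqP ->|/existsP[z /andP[euz /IH[p [hp hl hs]]]]]; first by exists [::].
by exists (z :: p); rewrite /= euz hp hl ltnS hs.
Qed.

Lemma path_within u p : path e u p -> within e (size p) u (last u p).
Proof.
elim: p u => [|z p IH] u /=; first by rewrite eqxx.
by case/andP=> euz hp; apply/orP; right; apply/existsP; exists z; rewrite euz IH.
Qed.

(* Removing cycles: a reachable vertex is reachable in fewer than #|T| steps. *)
Lemma within_small n u v :
  within e n u v -> exists2 m, (m < #|T|)%N & within e m u v.
Proof.
case/within_path=> p [hp <- _]; case: (shortenP hp) => p' hp' hu _.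
exists (size p'); last exact: path_within.
by have := max_card (mem (u :: p')); rewrite (card_uniqP hu).
Qed.

Lemma dist_le j u v :
  within e j u v -> exists2 n, dist e u v = Some n & (n <= j)%N.
Proof.
move=> hj.
have [j1 [hj1 hw1 hle]] : exists j1, [/\ (j1 < #|T|)%N, within e j1 u v & (j1 <= j)%N].
  have [hjT|hTj] := ltnP j #|T|; first by exists j.
  have [m hm hw] := within_small hj.
  by exists m; split=> //; apply: leq_trans (ltnW hm) hTj.
have hf : (find (fun n => within e n u v) (iota 0 #|T|) <= j1)%N.
  by rewrite leqNgt; apply/negP => /(before_find 0); rewrite nth_iota // add0n hw1.
rewrite /dist; set f := find _ _ in hf *.
rewrite (leq_ltn_trans hf hj1); exists f => //; exact: leq_trans hf hle.
Qed.

Lemma dist_within u v n : dist e u v = Some n -> within e n u v.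
Proof.
rewrite /dist; set f := find _ _; case: ifP => // hf [<-].
have hh : has (fun n => within e n u v) (iota 0 #|T|) by rewrite has_find size_iota.
by have := nth_find 0 hh; rewrite -/f nth_iota // add0n.
Qed.

Lemma dist_triangle u w v m n :
  dist e u w = Some m -> dist e w v = Some n ->
  exists2 p, dist e u v = Some p & (p <= m + n)%N.
Proof. by move=> /dist_within huw /dist_within hwv; exact: dist_le (within_trans huw hwv). Qed.

End Walks.

Section Diameter.
Variables (T : finType) (e : rel T).

Lemma diam_row_le a t acc D :
  foldr (fun b acc' => match dist e a b, acc' with
           | Some m, Some n => Some (maxn m n)
           | _, _ => None end) acc t = Some D ->
  (exists2 D0, acc = Some D0 & (D0 <= D)%N) /\
  (forall b, b \in t -> exists2 m, dist e a b = Some m & (m <= D)%N).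
Proof.
elim: t D => [|b t IH] D /=; first by move=> ->; split=> //; exists D.
case hd: (dist e a b) => [m|] //; case hf: (foldr _ _ t) => [n|] // [<-].
have [[D0 h1 h2] h3] := IH _ hf.
split; first by exists D0 => //; apply: leq_trans h2 (leq_maxr _ _).
move=> c; rewrite inE => /predU1P[->|/h3[m' h4 h5]]; first by exists m; rewrite ?leq_maxl.
by exists m' => //; apply: leq_trans h5 (leq_maxr _ _).
Qed.

Lemma diam_rows_le s t D :
  foldr (fun a acc => foldr (fun b acc' =>
           match dist e a b, acc' with
           | Some m, Some n => Some (maxn m n)
           | _, _ => None end) acc s) (Some 0%N) t = Some D ->
  forall a b, a \in t -> b \in s -> exists2 m, dist e a b = Some m & (m <= D)%N.
Proof.
elim: t D => [|a t IH] D //= /diam_row_le[[D0 h1 h2] h3] c b.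
rewrite inE => /predU1P[->|hc] hb; first exact: h3.
by have [m h4 h5] := IH _ h1 c b hc hb; exists m => //; apply: leq_trans h5 h2.
Qed.

Lemma diam_le s D a b :
  diam e s = Some D -> a \in s -> b \in s -> exists2 m, dist e a b = Some m & (m <= D)%N.
Proof. by move=> h; apply: (diam_rows_le h). Qed.

End Diameter.

(* The constraints (1)-(5) and (7) of an assignment, i.e. feasibility without
   the locality constraint (6); group shifting preserves exactly these. *)
Definition pre_feasible (T : finType) (R : archiRealFieldType) (L : T -> nat) (k : nat)
  (x : T -> T -> R) (y : T -> R) : Prop :=
  [/\ \sum_(u : T) y u = k%:R,
      (forall u v, x u v <= y u),
      (forall u, \sum_(v : T) x u v <= (L u)%:R * y u),
      (forall v, \sum_(u : T) x u v = 1)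
    & (forall u, 0 <= y u <= 1) /\ (forall u v, 0 <= x u v)].

Definition local (T : finType) (e : rel T) (R : archiRealFieldType)
  (delta : option nat) (x : T -> T -> R) : Prop :=
  forall u v, dist_gt (dist e u v) delta -> x u v = 0.

Lemma feasibleP (T : finType) (e : rel T) (R : archiRealFieldType) (L : T -> nat)
  (k : nat) (delta : option nat) (x : T -> T -> R) (y : T -> R) :
  feasible e L k delta x y <-> pre_feasible L k x y /\ local e delta x.
Proof. by split=> [[? ? ? ? [? ? ?]]|[[? ? ? ? [? ?]] ?]]. Qed.

Lemma sum_pair (T : finType) (R : archiRealFieldType) (f : T -> R) (a b : T) :
  a != b -> \sum_u f u = f a + f b + \sum_(u | (u != a) && (u != b)) f u.
Proof.
move=> nab; rewrite (bigD1 a) //= (bigD1 b) //= 1?eq_sym // addrA.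
by congr (_ + _); apply: eq_bigl => u; rewrite andbC.
Qed.

Section Shift.
Variables (T : finType) (R : archiRealFieldType) (x : T -> T -> R) (y : T -> R).
Variables (alpha : R) (a b : T).
Hypotheses (nab : a != b) (ya_gt0 : 0 < y a).
Hypotheses (alpha_ge0 : 0 <= alpha) (alpha_le_ya : alpha <= y a).

Let x' := (shift alpha a b x y).1.
Let y' := (shift alpha a b x y).2.

Let eps := alpha / y a.

Fact eps_ge0 : 0 <= eps. Proof. by rewrite divr_ge0 // ltW. Qed.
Fact eps_le1 : eps <= 1. Proof. by rewrite ler_pdivrMr // mul1r. Qed.
Fact alpha_eps : alpha = eps * y a. Proof. by rewrite mulfVK // gt_eqF. Qed.

Lemma shift_xa v : x' a v = x a v - eps * x a v.
Proof. by rewrite /x' /= eqxx. Qed.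
Lemma shift_xb v : x' b v = x b v + eps * x a v.
Proof. by rewrite /x' /= eq_sym (negPf nab) eqxx. Qed.
Lemma shift_x_other u v : u != a -> u != b -> x' u v = x u v.
Proof. by move=> /negPf nua /negPf nub; rewrite /x' /= nua nub. Qed.
Lemma shift_ya : y' a = y a - alpha.
Proof. by rewrite /y' /= eqxx. Qed.
Lemma shift_yb : y' b = y b + alpha.
Proof. by rewrite /y' /= eq_sym (negPf nab) eqxx. Qed.
Lemma shift_y_other u : u != a -> u != b -> y' u = y u.
Proof. by move=> /negPf nua /negPf nub; rewrite /y' /= nua nub. Qed.

Lemma shift_support u v : 0 < x' u v -> 0 < x u v \/ 0 < x a v.
Proof.
have := eps_ge0; have := eps_le1.
have [->|nua] := eqVneq u a; first by rewrite shift_xa; right; nra.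
have [->|nub] := eqVneq u b; last by rewrite shift_x_other //; left.
rewrite shift_xb => e1 e0 hp; have [ha|ha] := ltrP 0 (x a v); [right|left]; nra.
Qed.

Lemma shift_rowP (P : T -> Prop) :
  P a -> P b -> (forall u, u != a -> u != b -> P u) -> forall u, P u.
Proof.
by move=> Pa Pb Po u; have [->|nua] := eqVneq u a; last have [->|nub] := eqVneq u b; auto.
Qed.

Lemma shift_y_sum : \sum_u y' u = \sum_u y u.
Proof.
rewrite (sum_pair y nab) (sum_pair y' nab) shift_ya shift_yb addrACA addNr addr0.
by congr (_ + _); apply: eq_bigr => u /andP[]; apply: shift_y_other.
Qed.

Lemma shift_col_sum v : \sum_u x' u v = \sum_u x u v.
Proof.
rewrite (sum_pair (x^~ v) nab) (sum_pair (x'^~ v) nab) shift_xa shift_xb.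
rewrite addrACA addNr addr0.
by congr (_ + _); apply: eq_bigr => u /andP[]; apply: shift_x_other.
Qed.

(* Capacities are respected when mass moves towards the larger capacity
   L(b) >= L(a): row a loses the same fraction eps of its load and of y_a,
   and row b gains eps times row a, at most eps * L(a) * y_a <= L(b) * alpha. *)
Lemma shift_capacity (L : T -> nat) :
  (L a <= L b)%N -> (forall v, 0 <= x a v) ->
  (forall u, \sum_v x u v <= (L u)%:R * y u) ->
  forall u, \sum_v x' u v <= (L u)%:R * y' u.
Proof.
move=> hL hxa hcap; have e0 := eps_ge0; have e1 := eps_le1; have ea := alpha_eps.
have Lab : (L a)%:R <= (L b)%:R :> R by rewrite ler_nat.
have La0 : 0 <= (L a)%:R :> R by [].
have Sa0 : 0 <= \sum_v x a v by apply: sumr_ge0 => v _.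
have capa := hcap a; have capb := hcap b.
apply: shift_rowP => [|| u nua nub]; rewrite ?shift_ya ?shift_yb.
- by rewrite (eq_bigr _ (fun v _ => shift_xa v)) sumrB -mulr_sumr; nra.
- rewrite (eq_bigr _ (fun v _ => shift_xb v)) big_split -mulr_sumr /=.
  by have := ler_wpM2l e0 capa; have := ler_wpM2r (ltW ya_gt0) Lab; nra.
- by rewrite shift_y_other // (eq_bigr _ (fun v _ => shift_x_other v nua nub)).
Qed.

Lemma shift_pre_feasible (L : T -> nat) (k : nat) :
  (L a <= L b)%N -> alpha <= 1 - y b -> pre_feasible L k x y -> pre_feasible L k x' y'.
Proof.
move=> hL alpha_le_yb [hsum hxy hcap hdem [hy hx]].
have e0 := eps_ge0; have e1 := eps_le1; have ea := alpha_eps.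
split; [by rewrite shift_y_sum | | exact: shift_capacity | by move=> v; rewrite shift_col_sum |].
  apply: shift_rowP => [v|v|u nua nub v]; rewrite ?shift_xa ?shift_ya ?shift_xb ?shift_yb.
  - by have := hxy a v; have := hx a v; nra.
  - by have := hxy b v; have := hxy a v; have := hx a v; nra.
  - by rewrite shift_x_other ?shift_y_other.
split.
  have /andP[ya0 ya1] := hy a; have /andP[yb0 yb1] := hy b.
  apply: shift_rowP => [||u nua nub]; last by rewrite shift_y_other.
  - by rewrite shift_ya; move: alpha_ge0 alpha_le_ya => *; apply/andP; split; lra.
  - by rewrite shift_yb; move: alpha_ge0 alpha_le_yb => *; apply/andP; split; lra.
apply: shift_rowP => [v|v|u nua nub v]; rewrite ?shift_xa ?shift_xb ?shift_x_other //.
- by have := hx a v; nra.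
- by have := hx a v; have := hx b v; nra.
Qed.

End Shift.

Definition tracks (T : finType) (R : archiRealFieldType) (s : seq T)
  (x x' : T -> T -> R) : Prop :=
  (forall u v, u \notin s -> x' u v = x u v) /\
  (forall u v, u \in s -> 0 < x' u v -> exists2 w, w \in s & 0 < x w v).

Definition gs_invariant (T : finType) (R : archiRealFieldType) (L : T -> nat)
  (k : nat) (s : seq T) (x : T -> T -> R) (xy : (T -> T -> R) * (T -> R)) : Prop :=
  pre_feasible L k xy.1 xy.2 /\ tracks s x xy.1.

Definition fcount (T : finType) (R : archiRealFieldType) (s : seq T) (y : T -> R) : nat :=
  count (fun v => fractional (y v)) s.

Lemma frac_bounds (R : archiRealFieldType) (r : R) :
  0 <= r <= 1 -> fractional r -> 0 < r < 1.
Proof.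
case/andP=> h0 h1 hf; rewrite !lt_neqAle h0 h1 !andbT.
by apply/andP; split; apply: contra hf => /eqP h; [rewrite -h int_num0 | rewrite h int_num1].
Qed.

Lemma count_sub_lt (T : Type) (f g : pred T) (s : seq T) :
  subpred g f -> has (predD f g) s -> (count g s < count f s)%N.
Proof.
move=> gf; rewrite has_count => hD.
have -> : count f s = (count g s + count (predD f g) s)%N.
  rewrite -count_predUI (@eq_count _ (predI _ _) pred0) ?count_pred0 ?addn0.
    by apply: eq_count => u /=; case: (boolP (g u)) => [/gf ->|]; rewrite ?andbT.
  by move=> u /=; case: (g u); rewrite ?andbF.
by rewrite -addn1 leq_add2l.
Qed.

Lemma tracks_shift (T : finType) (R : archiRealFieldType) (s : seq T)
  (x x1 : T -> T -> R) (y1 : T -> R) (alpha : R) (a b : T) :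
  a != b -> 0 < y1 a -> 0 <= alpha -> alpha <= y1 a -> a \in s -> b \in s ->
  tracks s x x1 -> tracks s x (shift alpha a b x1 y1).1.
Proof.
move=> nab ya0 al0 ala ain bin [hout hin]; split=> u v us.
  by rewrite shift_x_other ?hout //; apply: contraNneq us => ->.
by case/(shift_support nab ya0 al0 ala) => [/(hin u v us)|/(hin a v ain)].
Qed.

Lemma fractional_ends (T : finType) (R : archiRealFieldType) (L : T -> nat)
  (s : seq T) (y : T -> R) (a c : T) (rest : seq T) :
  uniq s -> sorted (fun a b => (L a <= L b)%N) s ->
  [seq v <- s | fractional (y v)] = a :: c :: rest ->
  let b := last c rest in
  [/\ a \in s, b \in s, a != b, (L a <= L b)%N & fractional (y a) && fractional (y b)].
Proof.
move=> us ss hf b.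
have mf w : w \in a :: c :: rest -> w \in s /\ fractional (y w).
  by rewrite -hf mem_filter => /andP[].
have bin : b \in c :: rest by apply: mem_last.
have [ain fa] := mf a (mem_head _ _).
have [bs fb] := mf b (@mem_behead _ (a :: c :: rest) _ bin).
split; rewrite ?fa ?fb //.
  have := filter_uniq (fun v => fractional (y v)) us; rewrite hf => /andP[+ _].
  by apply: contraNneq => ->.
have tr : transitive (fun a b : T => (L a <= L b)%N) by move=> ? ? ?; apply: leq_trans.
have := sorted_filter tr (fun v => fractional (y v)) ss; rewrite hf => /(order_path_min tr).
by move/allP; apply.
Qed.

Lemma gs_step_progress (T : finType) (R : archiRealFieldType) (L : T -> nat) (k : nat)
  (s : seq T) (x : T -> T -> R) (xy : (T -> T -> R) * (T -> R)) :
  uniq s -> sorted (fun a b => (L a <= L b)%N) s -> gs_invariant L k s x xy ->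
  gs_invariant L k s x (gs_step s xy) /\
  ((fcount s xy.2 <= 1)%N /\ gs_step s xy = xy \/
   (fcount s (gs_step s xy).2 < fcount s xy.2)%N).
Proof.
case: xy => x1 y1 us ss [hpre htr]; rewrite /gs_step /fcount -size_filter /=.
case hf: [seq v <- s | fractional (y1 v)] => [|a [|c rest]]; try by split=> //; left.
have [ain bin nab hL /andP[fa fb]] := fractional_ends us ss hf.
set b := last c rest in ain bin nab hL fa fb *.
have [_ _ _ _ [hy _]] := hpre.
have /andP[ya0 ya1] := frac_bounds (hy a) fa.
have /andP[yb0 yb1] := frac_bounds (hy b) fb.
set alpha := Num.min (y1 a) (1 - y1 b).
have al0 : 0 <= alpha by rewrite le_min ltW //= subr_ge0 ltW.
have ala : alpha <= y1 a by rewrite ge_min lexx.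
have alb : alpha <= 1 - y1 b by rewrite ge_min lexx orbT.
split; first by split; [apply: shift_pre_feasible | apply: tracks_shift].
right; rewrite -hf !size_filter; apply: count_sub_lt => [u|] /=.
  have [->|nua] := eqVneq u a; first by rewrite fa.
  by have [->|nub] := eqVneq u b; rewrite ?fb // shift_y_other.
have [hab|hba] := lerP (y1 a) (1 - y1 b); apply/hasP; [exists a | exists b] => //.
  by rewrite /= eqxx fa /alpha (min_idPl hab) subrr /fractional int_num0.
rewrite /= eq_sym (negPf nab) eqxx fb /alpha (min_idPr (ltW hba)).
by rewrite addrC subrK /fractional int_num1.
Qed.

Lemma gs_iter_progress (T : finType) (R : archiRealFieldType) (L : T -> nat) (k : nat)
  (s : seq T) (x : T -> T -> R) (xy : (T -> T -> R) * (T -> R)) (n : nat) :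
  uniq s -> sorted (fun a b => (L a <= L b)%N) s -> gs_invariant L k s x xy ->
  gs_invariant L k s x (iter n (gs_step s) xy) /\
  (fcount s (iter n (gs_step s) xy).2 <= maxn 1 (size s - n))%N.
Proof.
move=> us ss hI; elim: n => [|n [IH1 IH2]].
  by split=> //=; rewrite subn0 (leq_trans (count_size _ _)) // leq_maxr.
have [hI' [[hc he]|hlt]] := gs_step_progress us ss IH1; split=> //=.
  by rewrite he; apply: leq_trans hc (leq_maxl _ _).
by move: hlt IH2; lia.
Qed.

Lemma group_shift_invariant (T : finType) (R : archiRealFieldType) (L : T -> nat)
  (k : nat) (s : seq T) (x : T -> T -> R) (y : T -> R) :
  uniq s -> sorted (fun a b => (L a <= L b)%N) s -> pre_feasible L k x y ->
  gs_invariant L k s x (group_shift s x y) /\ (fcount s (group_shift s x y).2 <= 1)%N.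
Proof.
move=> us ss hpre; have hI : gs_invariant L k s x (x, y).
  by split=> //; split=> // u v uin hp; exists u.
by have [? ] := gs_iter_progress (size s) us ss hI; rewrite subnn.
Qed.

Lemma local_support (T : finType) (e : rel T) (R : archiRealFieldType) (delta : nat)
  (x : T -> T -> R) (w v : T) :
  local e (Some delta) x -> 0 < x w v -> exists2 n, dist e w v = Some n & (n <= delta)%N.
Proof.
move=> hloc hw; case hd: (dist e w v) => [n|]; last by move: hw; rewrite hloc ?hd ?ltxx.
by exists n => //; rewrite leqNgt; apply: contraTN hw => hlt; rewrite hloc ?hd ?ltxx.
Qed.

(* Tracking a delta-local assignment on s gives (delta + diam s)-locality:
   v is served by some w in s with dist(w,v) <= delta, and u, w are both in s. *)
Lemma tracks_local (T : finType) (e : rel T) (R : archiRealFieldType) (s : seq T)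
  (delta : nat) (x x' : T -> T -> R) :
  local e (Some delta) x -> tracks s x x' -> (forall u v, 0 <= x' u v) ->
  local e (oadd (Some delta) (diam e s)) x'.
Proof.
move=> hloc [hout hin] hx' u v; case hd: (diam e s) => [D|] //= hgt.
have [us|nus] := boolP (u \in s); last first.
  by rewrite hout // hloc //; move: hgt; case: (dist e u v) => //= n; lia.
have := hx' u v; rewrite le_eqVlt => /predU1P[<- //|hp].
have [w ws /(local_support hloc)[n hwv hn]] := hin u v us hp.
have [m huw hm] := diam_le hd us ws.
have [p huv hp'] := dist_triangle huw hwv.
by move: hgt; rewrite huv /=; lia.
Qed.

Lemma radius_tracks (T : finType) (e : rel T) (R : archiRealFieldType) (s : seq T)
  (x x' : T -> T -> R) (v : T) :
  tracks s x x' -> v \notin s -> radius e x' v = radius e x v.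
Proof. by move=> [hout _] vs; apply: eq_bigl => w; rewrite hout. Qed.

Theorem mainTheorem10 (T : finType) (e : rel T)
  (e_sym : symmetric e) (e_irr : irreflexive e)
  (R : archiRealFieldType) (L : T -> nat) (k : nat) (k_pos : (0 < k)%N)
  (delta : nat) (x : T -> T -> R) (y : T -> R)
  (s : seq T) (s_uniq : uniq s) (s_sorted : sorted (fun a b => (L a <= L b)%N) s) :
  feasible e L k (Some delta) x y ->
  let d := diam e s in
  let xy' := group_shift s x y in
  [/\ feasible e L k (oadd (Some delta) d) xy'.1 xy'.2,
      (count (fun v => fractional (xy'.2 v)) s <= 1)%N
    & forall v, v \notin s -> (radius e xy'.1 v <= radius e x v)%N].
Proof.
move=> /feasibleP[hpre hloc] d xy'.
have [[hpre' htr] hcount] := group_shift_invariant s_uniq s_sorted hpre.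
split=> // [|v vs]; last by rewrite (radius_tracks e htr vs).
apply/feasibleP; split=> //; apply: tracks_local hloc htr _.
by case: hpre' => _ _ _ _ [].
Qed.
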